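(* Let $l,m$ be positive integers, $n=l+m$, $k=\operatorname{lcm}(l,m)$, let $\alpha_1,\dots,\alpha_l,\beta_1,\dots,\beta_m\ge 0$ be given (in this order), not all zero, with $\alpha_1+\dots+\alpha_l=\beta_1+\dots+\beta_m$, put $\boldsymbol\nu=(\alpha_1,\dots,\alpha_l,-\beta_1,\dots,-\beta_m)$, and let $\boldsymbol\rho=(\rho_1,\dots,\rho_k)$ with every $\rho_i>1$. Then there are unique $k$-tuples of real numbers $(u_0,\dots,u_{k-1})$ and $(v_0,\dots,v_{k-1})$ such that, with the points ${\bf a}_r^t,{\bf b}_r^t$ and segments $\mathcal A_r^t,\mathcal B_r^t$ defined from them as in the context, every segment $\mathcal A_r^t$ ($0\le r<k$, $t\in\mathbb Z$) has slope $\alpha_{r+1}$, every segment $\mathcal B_r^t$ ($0\le r<k$, $t\in\mathbb Z$) has slope $-\beta_{r+1}$, and the set $$\mathcal G(\boldsymbol\nu,\boldsymbol\rho)=\{{\bf 0}\}\cup\bigcup_{t\in\mathbb Z}\bigcup_{0\le r<k}\left(\mathcal A_r^t\cup\mathcal B_r^t\right)\subset\mathbb R^2$$ is a regular $\boldsymbol\nu$-graph.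
   Context: Indexing conventions: for an integer $r$, $\alpha_r:=\alpha_i$ where $1\le i\le l$ and $r\equiv i\pmod l$; $\beta_r:=\beta_j$ where $1\le j\le m$ and $r\equiv j\pmod m$; $\rho_r:=\rho_h$ where $1\le h\le k$ and $r\equiv h\pmod k$. Set $\sigma_0=1$, $\sigma_r=\rho_1\cdots\rho_r$ for $1\le r\le k$, $\tau=\sigma_k=\rho_1\cdots\rho_k$, and for arbitrary $r=sk+h$ with $s\in\mathbb Z$, $0\le h<k$, set $\sigma_r=\tau^s\sigma_h$, $u_r=u_h$, $v_r=v_h$. For $r,t\in\mathbb Z$ define points ${\bf a}_r^t=\tau^t\sigma_r(1,u_r)$ and ${\bf b}_r^t=\tau^t\sigma_r(1,v_r)$ in $\mathbb R^2$, and for $0\le r<k$, $t\in\mathbb Z$ the closed line segments $\mathcal A_r^t=[{\bf a}_r^t,{\bf b}_{r+l}^t]$ and $\mathcal B_r^t=[{\bf b}_r^t,{\bf a}_{r+m}^t]$. A $\boldsymbol\nu$-system is an $n$-tuple of functions $P_1,\dots,P_n:[0,\infty)\to\mathbb R$ which are continuous, satisfy $P_1\le P_2\le\dots\le P_n$ and $P_1(0)=\dots=P_n(0)=0$, are piecewise linear with only finitely many linear pieces in any interval with positive endpoints, have slopes among $\alpha_1,\dots,\alpha_l,-\beta_1,\dots,-\beta_m$, and such that on every interval where each $P_i$ is linear, the slopes of $P_1,\dots,P_n$ are the numbers $\alpha_1,\dots,\alpha_l,-\beta_1,\dots,-\beta_m$ in some order. A $\boldsymbol\nu$-graph is the union of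 the graphs of the functions of a $\boldsymbol\nu$-system. A $\boldsymbol\nu$-system (and its graph) is regular if the graph is invariant under the map $\boldsymbol\eta\mapsto\tau'\boldsymbol\eta$ of $\mathbb R^2$ for some $\tau'>1$. *)

From Stdlib Require Import Reals ZArith Arith List Permutation.
Open Scope R_scope.

(* For an integer r, the index i in {1,...,p} with r = i (mod p). *)
Definition idx1 (p : nat) (r : Z) : nat :=
  (Z.to_nat ((r - 1) mod Z.of_nat p) + 1)%nat.

Definition idx0 (p : nat) (r : Z) : nat := Z.to_nat (r mod Z.of_nat p).

Fixpoint sigma_nat (rho : nat -> R) (h : nat) : R :=
  match h with
  | O => 1
  | S h' => sigma_nat rho h' * rho (S h')
  end.

Definition tau (rho : nat -> R) (k : nat) : R := sigma_nat rho k.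

Definition sigma (rho : nat -> R) (k : nat) (r : Z) : R :=
  powerRZ (tau rho k) (r / Z.of_nat k) * sigma_nat rho (idx0 k r).

Definition pt (rho : nat -> R) (k : nat) (w : nat -> R) (r t : Z) : R * R :=
  let c := powerRZ (tau rho k) t * sigma rho k r in
  (c, c * w (idx0 k r)).

Definition pa rho k (u : nat -> R) r t := pt rho k u r t.
Definition pb rho k (v : nat -> R) r t := pt rho k v r t.

Definition segment (p q : R * R) (z : R * R) : Prop :=
  exists s, 0 <= s <= 1 /\
    z = (fst p + s * (fst q - fst p), snd p + s * (snd q - snd p)).

Definition slope (p q : R * R) : R := (snd q - snd p) / (fst q - fst p).

Definition segA l k rho u v (r : nat) (t : Z) : (R * R) * (R * R) :=
  (pa rho k u (Z.of_nat r) t, pb rho k v (Z.of_nat (r + l)) t).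
Definition segB m k rho u v (r : nat) (t : Z) : (R * R) * (R * R) :=
  (pb rho k v (Z.of_nat r) t, pa rho k u (Z.of_nat (r + m)) t).

Definition slope_conditions (l m : nat) (alpha beta rho u v : nat -> R) : Prop :=
  let k := Nat.lcm l m in
  forall (r : nat) (t : Z), (r < k)%nat ->
    slope (fst (segA l k rho u v r t)) (snd (segA l k rho u v r t))
      = alpha (idx1 l (Z.of_nat r + 1)) /\
    slope (fst (segB m k rho u v r t)) (snd (segB m k rho u v r t))
      = - beta (idx1 m (Z.of_nat r + 1)).

Definition Gset (l m : nat) (rho u v : nat -> R) (z : R * R) : Prop :=
  let k := Nat.lcm l m in
  z = (0, 0) \/
  exists (t : Z) (r : nat), (r < k)%nat /\
    (segment (fst (segA l k rho u v r t)) (snd (segA l k rho u v r t)) z \/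
     segment (fst (segB m k rho u v r t)) (snd (segB m k rho u v r t)) z).

Definition nu_list (l m : nat) (alpha beta : nat -> R) : list R :=
  map alpha (seq 1 l) ++ map (fun j => - beta j) (seq 1 m).

Definition affine_on (f : R -> R) (s x y : R) : Prop :=
  forall a b, x <= a <= y -> x <= b <= y -> f b - f a = s * (b - a).

(* P_1, ..., P_n (indices 1..n, n = length nu), functions on [0, oo)
   (values outside [0, oo) are irrelevant). *)
Definition nu_system (nu : list R) (P : nat -> R -> R) : Prop :=
  let n := length nu in
  (forall i, (1 <= i <= n)%nat -> forall x, 0 <= x ->
     forall eps, 0 < eps -> exists delta, 0 < delta /\
       forall y, 0 <= y -> Rabs (y - x) < delta -> Rabs (P i y - P i x) < eps) /\
  (forall i, (1 <= i < n)%nat -> forall x, 0 <= x -> P i x <= P (S i) x) /\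
  (forall i, (1 <= i <= n)%nat -> P i 0 = 0) /\
  (forall a b, 0 < a -> a < b ->
     exists xs : list R,
       let pts := a :: xs ++ b :: nil in
       (forall j, (S j < length pts)%nat ->
          nth j pts 0 < nth (S j) pts 0 /\
          forall i, (1 <= i <= n)%nat ->
            exists s, affine_on (P i) s (nth j pts 0) (nth (S j) pts 0))) /\
  (forall i, (1 <= i <= n)%nat -> forall x y s, 0 <= x -> x < y ->
     affine_on (P i) s x y -> In s nu) /\
  (forall x y (s : nat -> R), 0 <= x -> x < y ->
     (forall i, (1 <= i <= n)%nat -> affine_on (P i) (s i) x y) ->
     Permutation (map s (seq 1 n)) nu).

Definition graph_union (n : nat) (P : nat -> R -> R) (z : R * R) : Prop :=
  0 <= fst z /\ exists i, (1 <= i <= n)%nat /\ snd z = P i (fst z).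

Definition nu_graph (nu : list R) (G : R * R -> Prop) : Prop :=
  exists P, nu_system nu P /\ forall z, G z <-> graph_union (length nu) P z.

Definition regular_nu_graph (nu : list R) (G : R * R -> Prop) : Prop :=
  nu_graph nu G /\
  exists tau' : R, 1 < tau' /\
    forall z : R * R, G z <-> G (tau' * fst z, tau' * snd z).

Definition sum_range (f : nat -> R) (p : nat) : R :=
  fold_right Rplus 0 (map f (seq 1 p)).

(* Extend u, v to all r in Z with period k and put X_r = sigma_r u_r, Y_r = sigma_r v_r,
   the ordinates of a_r and b_r; then a_r^t = a_(r+tk) and b_r^t = b_(r+tk). The slope
   conditions become the recurrences
     Y_(r+l) - X_r = alpha_(r+1) (sigma_(r+l) - sigma_r),
     X_(r+m) - Y_r = - beta_(r+1) (sigma_(r+m) - sigma_r),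
   hence X_(r+n) = X_r + C_r with C_r explicit. As also X_(r+k) = tau X_r, reaching r + kn
   in both ways gives (tau^n - 1) X_r = sum_(j<k) C_(r+jn), which forces u and v and
   conversely defines a solution.
   Over the cell [sigma_h, sigma_(h+1)] exactly l + m segments are present, A_(h-j) for
   j < l and B_(h-j) for j < m, and their slopes are a permutation of nu; P_i(x) is the
   i-th smallest of their ordinates. Between two crossings of these lines the order is
   constant, so the P_i are piecewise linear with slopes permuting nu; at sigma_h the
   segments ending there are continued by those starting there, so the P_i are
   continuous; near 0 the graph lies in a cone |y| <= M x. Multiplication by tau shifts
   every index by k, so the graph is regular. *)

From Stdlib Require Import Reals ZArith Arith List Permutation Lra Lia.
From Stdlib Require Import Sorting.Sorted ClassicalEpsilon.
Open Scope R_scope.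

Section SortBy.
Context {A : Type} (f : A -> R).

Fixpoint insert_by (a : A) (s : list A) : list A :=
  match s with
  | nil => a :: nil
  | b :: s' => if Rle_dec (f a) (f b) then a :: s else b :: insert_by a s'
  end.

Fixpoint sort_by (s : list A) : list A :=
  match s with nil => nil | a :: s' => insert_by a (sort_by s') end.

Lemma insert_by_perm a s : Permutation (insert_by a s) (a :: s).
Proof.
  induction s as [|b s IH]; simpl; auto.
  destruct (Rle_dec (f a) (f b)); auto.
  eapply perm_trans; [apply perm_skip, IH | apply perm_swap].
Qed.

Lemma sort_by_perm s : Permutation (sort_by s) s.
Proof.
  induction s as [|a s IH]; simpl; auto.
  eapply perm_trans; [apply insert_by_perm | auto].
Qed.

Lemma insert_by_sorted a s :
  StronglySorted Rle (map f s) -> StronglySorted Rle (map f (insert_by a s)).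
Proof.
  induction s as [|b s IH]; intro Hs; simpl.
  - repeat constructor.
  - apply StronglySorted_inv in Hs as [Hs Hb].
    destruct (Rle_dec (f a) (f b)) as [Hab|Hab]; simpl.
    + constructor; [constructor; auto|].
      constructor; auto. eapply Forall_impl; [|exact Hb]. intros; lra.
    + constructor; auto.
      apply (Permutation_Forall (Permutation_sym (Permutation_map f (insert_by_perm a s)))).
      simpl. constructor; auto. lra.
Qed.

Lemma sort_by_sorted s : StronglySorted Rle (map f (sort_by s)).
Proof. induction s; simpl; [constructor | apply insert_by_sorted; auto]. Qed.

End SortBy.

Lemma StronglySorted_map_monotone {A} (f g : A -> R) s :
  StronglySorted Rle (map f s) ->
  (forall a b, In a s -> In b s -> f a <= f b -> g a <= g b) ->
  StronglySorted Rle (map g s).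
Proof.
  induction s as [|a s IH]; intros Hs Hfg; cbn [map] in Hs |- *; [constructor|].
  apply StronglySorted_inv in Hs as [Hs Ha]. constructor.
  - apply IH; auto. intros; apply Hfg; simpl; auto.
  - rewrite Forall_map in Ha |- *. rewrite Forall_forall in Ha |- *.
    intros b Hb. apply Hfg; simpl; auto.
Qed.

Lemma StronglySorted_Rle_nth s i :
  StronglySorted Rle s -> (S i < length s)%nat -> nth i s 0 <= nth (S i) s 0.
Proof.
  revert i; induction s as [|a s IH]; intros i Hs Hi; simpl in Hi; [lia|].
  apply StronglySorted_inv in Hs as [Hs Ha].
  destruct i as [|i]; simpl.
  - destruct s as [|b s]; simpl in Hi; [lia|]. now inversion Ha.
  - apply IH; auto. lia.
Qed.

Lemma StronglySorted_Rle_perm_eq a b :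
  StronglySorted Rle a -> StronglySorted Rle b -> Permutation a b -> a = b.
Proof.
  revert b; induction a as [|x a IH]; intros b Ha Hb Hab.
  - now apply Permutation_nil in Hab.
  - destruct b as [|y b]; [now apply Permutation_sym, Permutation_nil in Hab|].
    apply StronglySorted_inv in Ha as [Ha Hx], Hb as [Hb Hy].
    rewrite Forall_forall in Hx, Hy.
    assert (x = y) as <-.
    { pose proof (Permutation_in y (Permutation_sym Hab) (or_introl eq_refl)) as Iy.
      pose proof (Permutation_in x Hab (or_introl eq_refl)) as Ix.
      destruct Iy as [<-|Iy]; auto. destruct Ix as [->|Ix]; auto.
      apply Hx in Iy. apply Hy in Ix. lra. }
    f_equal. apply IH; auto. eapply Permutation_cons_inv; eauto.
Qed.

Definition sort_R : list R -> list R := sort_by (fun x => x).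

Lemma sort_R_perm s : Permutation (sort_R s) s.
Proof. apply sort_by_perm. Qed.

Lemma sort_R_sorted s : StronglySorted Rle (sort_R s).
Proof. rewrite <- (map_id (sort_R s)). apply sort_by_sorted. Qed.

Lemma sort_R_perm_eq s s' : Permutation s s' -> sort_R s = sort_R s'.
Proof.
  intro H. apply StronglySorted_Rle_perm_eq; try apply sort_R_sorted.
  eapply perm_trans; [apply sort_R_perm|].
  eapply perm_trans; [exact H | apply Permutation_sym, sort_R_perm].
Qed.

Lemma sort_R_id s : StronglySorted Rle s -> sort_R s = s.
Proof.
  intro H. apply StronglySorted_Rle_perm_eq; auto using sort_R_sorted, sort_R_perm.
Qed.

Lemma slope_eq_iff p q a :
  fst p < fst q -> slope p q = a <-> snd q - snd p = a * (fst q - fst p).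
Proof.
  intro H. unfold slope. split; intro E.
  - rewrite <- E. field. lra.
  - rewrite E. field. lra.
Qed.

Lemma segment_iff p q z a :
  fst p < fst q -> snd q - snd p = a * (fst q - fst p) ->
  segment p q z <-> fst p <= fst z <= fst q /\ snd z = snd p + a * (fst z - fst p).
Proof.
  destruct p as [p1 p2], q as [q1 q2], z as [z1 z2]; unfold segment; simpl.
  intros Hpq Ha. split.
  - intros [s [Hs E]]. injection E as -> ->. split; [nra|]. rewrite Ha. ring.
  - intros [Hz E]. exists ((z1 - p1) / (q1 - p1)). split.
    + split; [unfold Rdiv; apply Rmult_le_pos; [lra | left; apply Rinv_0_lt_compat; lra]|].
      apply Rmult_le_reg_r with (q1 - p1); [lra|]. field_simplify; lra.
    + f_equal; [field | rewrite E, Ha; field]; lra.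
Qed.

Lemma step_cell (f : Z -> R) x r0 N :
  f r0 <= x -> x < f (r0 + Z.of_nat N)%Z -> exists h, f h <= x < f (h + 1)%Z.
Proof.
  revert r0; induction N as [|N IH]; intros r0 H0 HN.
  - rewrite Z.add_0_r in HN. lra.
  - destruct (Rle_dec (f (r0 + 1)%Z) x) as [H1|H1].
    + apply (IH (r0 + 1)%Z); auto.
      now replace (r0 + 1 + Z.of_nat N)%Z with (r0 + Z.of_nat (S N))%Z by lia.
    + exists r0. lra.
Qed.

Lemma continuity_of_local_lipschitz (g : R -> R) x d K :
  0 < d -> 0 <= K ->
  (forall y, Rabs (y - x) < d -> Rabs (g y - g x) <= K * Rabs (y - x)) ->
  forall eps, 0 < eps ->
  exists delta, 0 < delta /\ forall y, Rabs (y - x) < delta -> Rabs (g y - g x) < eps.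
Proof.
  intros Hd HK Hg eps Heps.
  assert (He : 0 < eps / (K + 1)) by (apply Rdiv_lt_0_compat; lra).
  exists (Rmin d (eps / (K + 1))). split; [now apply Rmin_pos|].
  intros y Hy. pose proof (Rmin_l d (eps / (K + 1))). pose proof (Rmin_r d (eps / (K + 1))).
  pose proof (Rabs_pos (y - x)).
  assert (Rabs (y - x) * (K + 1) < eps).
  { apply Rmult_lt_reg_r with (/ (K + 1)); [apply Rinv_0_lt_compat; lra|].
    rewrite Rmult_assoc, Rinv_r by lra. unfold Rdiv in *. lra. }
  specialize (Hg y ltac:(lra)). nra.
Qed.

Lemma Rabs_interpolation_le S1 S2 x y A B M :
  0 < S1 < S2 -> S1 <= x <= S2 -> y * (S2 - S1) = A * (S2 - x) + B * (x - S1) ->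
  Rabs A <= M * S1 -> Rabs B <= M * S2 -> Rabs y <= M * x.
Proof.
  intros HS Hx E HA HB. apply Rmult_le_reg_r with (S2 - S1); [lra|].
  rewrite <- (Rabs_right (S2 - S1)) at 1 by lra. rewrite <- Rabs_mult, E.
  eapply Rle_trans; [apply Rabs_triang|]. rewrite !Rabs_mult.
  rewrite (Rabs_right (S2 - x)), (Rabs_right (x - S1)) by lra.
  assert (Rabs A * (S2 - x) <= M * S1 * (S2 - x)) by (apply Rmult_le_compat_r; lra).
  assert (Rabs B * (x - S1) <= M * S2 * (x - S1)) by (apply Rmult_le_compat_r; lra).
  nra.
Qed.

Lemma finite_bound (f : nat -> R) N :
  exists M, 0 <= M /\ forall j, (j < N)%nat -> Rabs (f j) <= M.
Proof.
  induction N as [|N [M [HM HMf]]]; [exists 0; split; [lra | intros; lia]|].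
  exists (Rmax M (Rabs (f N))). split; [eapply Rle_trans; [exact HM | apply Rmax_l]|].
  intros j Hj. destruct (Nat.eq_dec j N) as [->|]; [apply Rmax_r|].
  eapply Rle_trans; [apply HMf; lia | apply Rmax_l].
Qed.

Section Chain.
Variable Q : R -> R -> Prop.

Inductive chain : R -> R -> Prop :=
| chain_one a b : a < b -> Q a b -> chain a b
| chain_cons a c b : a < c -> Q a c -> chain c b -> chain a b.

Lemma chain_lt a b : chain a b -> a < b.
Proof. induction 1; lra. Qed.

Lemma chain_trans a c b : chain a c -> chain c b -> chain a b.
Proof. induction 1; intro; eapply chain_cons; eauto. Qed.

Lemma chain_first a b : chain a b -> exists c, a < c <= b /\ Q a c.
Proof.
  destruct 1 as [a b Hab HQ|a c b Hac HQ Hcb]; [exists b | exists c]; auto with real.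
  pose proof (chain_lt _ _ Hcb). split; auto; lra.
Qed.

Lemma chain_last a b : chain a b -> exists c, a <= c < b /\ Q c b.
Proof.
  induction 1 as [a b Hab HQ|a c b Hac HQ Hcb [d [Hd HQd]]];
    [exists a | exists d]; split; auto; lra.
Qed.

Lemma chain_subdivision a b : chain a b -> exists xs : list R,
  let pts := a :: xs ++ b :: nil in
  forall j, (S j < length pts)%nat ->
    nth j pts 0 < nth (S j) pts 0 /\ Q (nth j pts 0) (nth (S j) pts 0).
Proof.
  induction 1 as [a b Hab HQ|a c b Hac HQ Hcb [xs Hxs]].
  - exists nil. cbv zeta. intros [|j] Hj; simpl in *; [now split | lia].
  - exists (c :: xs). cbv zeta in *. intros [|j] Hj; simpl; [now split|].
    apply (Hxs j). simpl in Hj |- *. lia.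
Qed.

(* Induction on the list of breakpoints: splitting at one of them leaves the
   others as the only candidates on both halves. *)
Lemma chain_of_breakpoints (cs : list R) p q : p < q ->
  (forall p' q', p <= p' -> p' < q' -> q' <= q ->
     (forall c, In c cs -> ~ p' < c < q') -> Q p' q') ->
  chain p q.
Proof.
  revert p q; induction cs as [|c cs IH]; intros p q Hpq HQ.
  - apply chain_one; auto. apply HQ; try lra. intros c [].
  - assert (Hsplit : forall p0 q0, p <= p0 -> p0 < q0 -> q0 <= q -> ~ (p0 < c < q0) ->
              chain p0 q0).
    { intros p0 q0 ? ? ? Hc. apply IH; auto. intros p' q' ? ? ? Hcs. apply HQ; try lra.
      intros c' [<-|Hc'] Hin; [apply Hc; lra | now apply (Hcs c')]. }
    destruct (Rlt_dec p c), (Rlt_dec c q);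
      try (apply Hsplit; lra).
    apply chain_trans with c; apply Hsplit; lra.
Qed.

End Chain.

Lemma map_nth_seq1 {A B} (g : A -> B) d L :
  map (fun i => g (nth (pred i) L d)) (seq 1 (length L)) = map g L.
Proof.
  induction L as [|a L IH]; simpl; auto. f_equal.
  rewrite <- seq_shift, map_map, <- IH. apply map_ext_in. intros [|i] Hi; [|reflexivity].
  apply in_seq in Hi. lia.
Qed.

Definition line_at (L : R * R) (z : R) : R := snd L + fst L * z.

Definition values (z : R) (Ls : list (R * R)) : list R := map (fun L => line_at L z) Ls.

Definition crossing (L1 L2 : R * R) : R := (snd L2 - snd L1) / (fst L1 - fst L2).

Definition crossings (Ls : list (R * R)) : list R := flat_map (fun L => map (crossing L) Ls) Ls.

Lemma in_crossings Ls L1 L2 : In L1 Ls -> In L2 Ls -> In (crossing L1 L2) (crossings Ls).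
Proof. intros H1 H2. apply in_flat_map. exists L1. split; auto. now apply in_map. Qed.

Lemma line_le_of_no_crossing L1 L2 x y z : x < y -> x <= z <= y ->
  line_at L1 ((x + y) / 2) <= line_at L2 ((x + y) / 2) -> ~ (x < crossing L1 L2 < y) ->
  line_at L1 z <= line_at L2 z.
Proof.
  destruct L1 as [s1 b1], L2 as [s2 b2]. unfold line_at, crossing. cbn [fst snd].
  intros Hxy Hz Hmid Hc. set (c := (x + y) / 2) in *.
  destruct (Req_dec s1 s2) as [<-|Hs]; [lra|].
  set (w := (b2 - b1) / (s1 - s2)) in *.
  assert (Hd : forall t, b2 + s2 * t - (b1 + s1 * t) = (s2 - s1) * (t - w))
    by (intro; unfold w; field; lra).
  apply Rnot_lt_le. intro Hlt. apply Hc.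
  pose proof (Hd c). pose proof (Hd z). unfold c in *.
  destruct (Rlt_dec 0 (s2 - s1)).
  - assert (z - w < 0) by nra. assert (0 <= (x + y) / 2 - w) by nra. lra.
  - assert (0 < z - w) by nra. assert ((x + y) / 2 - w <= 0) by nra. lra.
Qed.

(* Between two consecutive crossings the lines keep their vertical order, so
   sorting at the midpoint sorts everywhere. *)
Lemma sorted_values_fixed_order Ls x y : x < y ->
  (forall c, In c (crossings Ls) -> ~ x < c < y) ->
  exists Ls', Permutation Ls' Ls /\
    forall z, x <= z <= y -> sort_R (values z Ls) = values z Ls'.
Proof.
  intros Hxy Hc. set (key L := line_at L ((x + y) / 2)).
  exists (sort_by key Ls). split; [apply sort_by_perm|]. intros z Hz.
  rewrite (sort_R_perm_eq _ (values z (sort_by key Ls))).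
  - apply sort_R_id. apply StronglySorted_map_monotone with key; [apply sort_by_sorted|].
    intros a b Ha Hb Hab.
    apply Permutation_in with (l' := Ls) in Ha, Hb; try apply sort_by_perm.
    apply line_le_of_no_crossing with x y; auto using in_crossings.
  - apply Permutation_map, Permutation_sym, sort_by_perm.
Qed.

Lemma affine_on_line_slope (f : R -> R) s x y p q L : affine_on f s x y ->
  x <= p -> p < q -> q <= y -> (forall z, p <= z <= q -> f z = line_at L z) -> s = fst L.
Proof.
  intros Ha H1 H2 H3 Hf. specialize (Ha p q ltac:(lra) ltac:(lra)).
  rewrite !Hf in Ha by lra. unfold line_at in Ha.
  apply Rmult_eq_reg_r with (q - p); lra.
Qed.

Lemma lipschitz_of_line_sides (g : R -> R) x c1 c2 L1 L2 : c1 < x < c2 ->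
  (forall z, c1 <= z <= x -> g z = line_at L1 z) ->
  (forall z, x <= z <= c2 -> g z = line_at L2 z) ->
  forall y, Rabs (y - x) < Rmin (x - c1) (c2 - x) ->
    Rabs (g y - g x) <= (Rabs (fst L1) + Rabs (fst L2)) * Rabs (y - x).
Proof.
  intros Hx H1 H2 y Hy.
  pose proof (Rmin_l (x - c1) (c2 - x)). pose proof (Rmin_r (x - c1) (c2 - x)).
  pose proof (Rabs_pos (fst L1)). pose proof (Rabs_pos (fst L2)). pose proof (Rabs_pos (y - x)).
  destruct (Rle_dec y x).
  - rewrite Rabs_left1 in Hy by lra. rewrite !H1 by lra. unfold line_at.
    replace (snd L1 + fst L1 * y - (snd L1 + fst L1 * x)) with (fst L1 * (y - x)) by ring.
    rewrite Rabs_mult. nra.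
  - rewrite Rabs_right in Hy by lra. rewrite !H2 by lra. unfold line_at.
    replace (snd L2 + fst L2 * y - (snd L2 + fst L2 * x)) with (fst L2 * (y - x)) by ring.
    rewrite Rabs_mult. nra.
Qed.

Lemma lcm_pos l m : (0 < l)%nat -> (0 < m)%nat -> (0 < Nat.lcm l m)%nat.
Proof.
  intros Hl Hm. destruct (Nat.eq_dec (Nat.lcm l m) 0) as [E|]; [|lia].
  apply Nat.lcm_eq_0 in E. lia.
Qed.

Lemma idx1_range p r : (0 < p)%nat -> (1 <= idx1 p r <= p)%nat.
Proof.
  intro Hp. unfold idx1. pose proof (Z.mod_pos_bound (r - 1) (Z.of_nat p) ltac:(lia)). lia.
Qed.

Lemma idx1_add_mul p k r t : (0 < p)%nat -> Nat.divide p k ->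
  idx1 p (r + t * Z.of_nat k) = idx1 p r.
Proof.
  intros Hp [c ->]. unfold idx1. rewrite Nat2Z.inj_mul.
  replace (r + t * (Z.of_nat c * Z.of_nat p) - 1)%Z
    with (r - 1 + t * Z.of_nat c * Z.of_nat p)%Z by ring.
  now rewrite Z.mod_add by lia.
Qed.

Lemma idx1_consecutive_perm p r : (0 < p)%nat ->
  Permutation (map (fun j => idx1 p (r - Z.of_nat j + 1)) (seq 0 p)) (seq 1 p).
Proof.
  intro Hp. apply NoDup_Permutation_bis.
  - apply FinFun.Injective_map_NoDup_in; [|apply seq_NoDup].
    intros i j Hi Hj E. apply in_seq in Hi, Hj. unfold idx1 in E. rewrite !Z.add_simpl_r in E.
    pose proof (Z.mod_pos_bound (r - Z.of_nat i) (Z.of_nat p) ltac:(lia)).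
    pose proof (Z.mod_pos_bound (r - Z.of_nat j) (Z.of_nat p) ltac:(lia)).
    pose proof (Z.div_mod (r - Z.of_nat i) (Z.of_nat p) ltac:(lia)).
    pose proof (Z.div_mod (r - Z.of_nat j) (Z.of_nat p) ltac:(lia)).
    assert (((r - Z.of_nat i) / Z.of_nat p - (r - Z.of_nat j) / Z.of_nat p)%Z = 0%Z) by nia.
    lia.
  - now rewrite length_map, !length_seq.
  - intros a Ha. apply in_map_iff in Ha as [j [<- _]]. apply in_seq.
    pose proof (idx1_range p (r - Z.of_nat j + 1) Hp). lia.
Qed.

Definition ordinate (rho : nat -> R) (k : nat) (w : nat -> R) (r : Z) : R :=
  sigma rho k r * w (idx0 k r).

Section Sigma.
Context {rho : nat -> R} {k : nat}.
Context (k_pos : (0 < k)%nat) (rho_gt1 : forall i, (1 <= i <= k)%nat -> 1 < rho i).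

Local Notation kZ := (Z.of_nat k).
Local Notation sg := (sigma rho k).
Local Notation tk := (tau rho k).

Lemma idx0_lt r : (idx0 k r < k)%nat.
Proof. unfold idx0. pose proof (Z.mod_pos_bound r kZ ltac:(lia)). lia. Qed.

Lemma idx0_spec r : r = (Z.of_nat (idx0 k r) + r / kZ * kZ)%Z.
Proof.
  unfold idx0. pose proof (Z.mod_pos_bound r kZ ltac:(lia)).
  pose proof (Z.div_mod r kZ ltac:(lia)). rewrite Z2Nat.id; lia.
Qed.

Lemma idx0_add_mul r t : idx0 k (r + t * kZ) = idx0 k r.
Proof. unfold idx0. now rewrite Z.mod_add by lia. Qed.

Lemma idx0_of_nat h : (h < k)%nat -> idx0 k (Z.of_nat h) = h.
Proof. intro H. unfold idx0. rewrite Z.mod_small by lia. apply Nat2Z.id. Qed.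

Lemma forall_Z_residues (Q : Z -> Prop) :
  (forall r, Q r) <-> (forall (h : nat) t, (h < k)%nat -> Q (Z.of_nat h + t * kZ)%Z).
Proof.
  split; [auto|]. intros H r. rewrite (idx0_spec r). apply H, idx0_lt.
Qed.

Lemma exists_Z_residues (Q : Z -> Prop) :
  (exists r, Q r) <-> (exists t (h : nat), (h < k)%nat /\ Q (Z.of_nat h + t * kZ)%Z).
Proof.
  split; [|intros [t [h [_ H]]]; eauto].
  intros [r H]. exists (r / kZ)%Z, (idx0 k r). rewrite <- idx0_spec. auto using idx0_lt.
Qed.

Lemma sigma_nat_ge1 h : (h <= k)%nat -> 1 <= sigma_nat rho h.
Proof.
  induction h as [|h IH]; intro Hh; simpl; [lra|].
  assert (1 <= sigma_nat rho h) by (apply IH; lia).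
  assert (1 < rho (S h)) by (apply rho_gt1; lia). nra.
Qed.

Lemma tau_gt1 : 1 < tk.
Proof.
  unfold tau. replace k with (S (pred k)) by lia. simpl.
  assert (1 <= sigma_nat rho (pred k)) by (apply sigma_nat_ge1; lia).
  assert (1 < rho (S (pred k))) by (apply rho_gt1; lia). nra.
Qed.

Lemma sigma_of_nat h : (h < k)%nat -> sg (Z.of_nat h) = sigma_nat rho h.
Proof.
  intro H. unfold sigma. rewrite idx0_of_nat, Z.div_small by lia. simpl. ring.
Qed.

Lemma sigma_add_mul r t : sg (r + t * kZ)%Z = powerRZ tk t * sg r.
Proof.
  pose proof tau_gt1. unfold sigma. rewrite idx0_add_mul, Z.div_add by lia.
  rewrite powerRZ_add by lra. ring.
Qed.

Lemma sigma_mul_k t : sg (t * kZ)%Z = powerRZ tk t.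
Proof.
  rewrite <- (Z.add_0_l (t * kZ)), sigma_add_mul. change 0%Z with (Z.of_nat 0).
  rewrite sigma_of_nat by lia. simpl. ring.
Qed.

Lemma sigma_pos r : 0 < sg r.
Proof.
  pose proof tau_gt1. pose proof (sigma_nat_ge1 (idx0 k r) (Nat.lt_le_incl _ _ (idx0_lt r))).
  unfold sigma. apply Rmult_lt_0_compat; [apply powerRZ_lt|]; lra.
Qed.

Lemma sigma_succ r : sg (r + 1)%Z = sg r * rho (S (idx0 k r)).
Proof.
  pose proof tau_gt1. pose proof (idx0_lt r) as Hh.
  rewrite (idx0_spec r) at 1 2. set (h := idx0 k r) in *. set (q := (r / kZ)%Z).
  replace (Z.of_nat h + q * kZ + 1)%Z with (Z.of_nat (S h) + q * kZ)%Z by lia.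
  rewrite !sigma_add_mul, (sigma_of_nat h) by lia.
  destruct (Nat.eq_dec (S h) k) as [E|E].
  - assert (Htau : tk = sigma_nat rho h * rho (S h)) by (unfold tau; now rewrite <- E).
    replace (Z.of_nat (S h)) with (1 * kZ)%Z by lia.
    rewrite sigma_mul_k, Htau. simpl. ring.
  - rewrite sigma_of_nat by lia. simpl. ring.
Qed.

Lemma sigma_lt_succ r : sg r < sg (r + 1)%Z.
Proof.
  rewrite sigma_succ. pose proof (sigma_pos r). pose proof (idx0_lt r).
  assert (1 < rho (S (idx0 k r))) by (apply rho_gt1; lia). nra.
Qed.

Lemma sigma_lt r1 r2 : (r1 < r2)%Z -> sg r1 < sg r2.
Proof.
  intro H. replace r2 with (r1 + Z.of_nat (Z.to_nat (r2 - r1 - 1)) + 1)%Z by lia.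
  induction (Z.to_nat (r2 - r1 - 1)) as [|d IH].
  - rewrite Z.add_0_r. apply sigma_lt_succ.
  - eapply Rlt_trans; [exact IH|].
    replace (r1 + Z.of_nat (S d) + 1)%Z with (r1 + Z.of_nat d + 1 + 1)%Z by lia.
    apply sigma_lt_succ.
Qed.

Lemma sigma_lt_iff r1 r2 : sg r1 < sg r2 <-> (r1 < r2)%Z.
Proof.
  split; [|apply sigma_lt]. intro H.
  destruct (Z_lt_le_dec r1 r2); auto.
  destruct (Z.eq_dec r1 r2) as [->|]; [lra|]. pose proof (sigma_lt r2 r1 ltac:(lia)). lra.
Qed.

Lemma sigma_le_iff r1 r2 : sg r1 <= sg r2 <-> (r1 <= r2)%Z.
Proof.
  split; intro H.
  - destruct (Z_le_gt_dec r1 r2); auto. pose proof (sigma_lt r2 r1 ltac:(lia)). lra.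
  - destruct (Z.eq_dec r1 r2) as [->|]; [lra|]. left; apply sigma_lt; lia.
Qed.

Lemma sigma_cell_exists x : 0 < x -> exists h, sg h <= x < sg (h + 1)%Z.
Proof.
  intro Hx. pose proof tau_gt1.
  assert (Habs : Rabs tk > 1) by (rewrite Rabs_right; lra).
  destruct (Pow_x_infinity tk Habs (x + 1)) as [N1 HN1].
  destruct (Pow_x_infinity tk Habs (/ x + 1)) as [N2 HN2].
  specialize (HN1 N1 (le_n _)). specialize (HN2 N2 (le_n _)).
  assert (0 < tk ^ N1) by (apply pow_lt; lra).
  assert (0 < tk ^ N2) by (apply pow_lt; lra).
  rewrite Rabs_right in HN1, HN2 by lra.
  assert (Hlo : sg (- Z.of_nat N2 * kZ)%Z <= x).
  { rewrite sigma_mul_k, powerRZ_neg', <- pow_powerRZ by lra.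
    assert (Hinv : / x < tk ^ N2) by lra.
    apply Rinv_lt_contravar in Hinv; [rewrite Rinv_inv in Hinv; lra|].
    apply Rmult_lt_0_compat; [apply Rinv_0_lt_compat|]; lra. }
  assert (Hhi : x < sg (Z.of_nat N1 * kZ)%Z) by (rewrite sigma_mul_k, <- pow_powerRZ; lra).
  assert (Hlt : (- Z.of_nat N2 * kZ < Z.of_nat N1 * kZ)%Z) by (apply sigma_lt_iff; lra).
  apply (step_cell sg x (- Z.of_nat N2 * kZ) (Z.to_nat (Z.of_nat N1 * kZ + Z.of_nat N2 * kZ))); auto.
  rewrite Z2Nat.id by lia. now replace (- Z.of_nat N2 * kZ + (Z.of_nat N1 * kZ + Z.of_nat N2 * kZ))%Z
    with (Z.of_nat N1 * kZ)%Z by ring.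
Qed.

Lemma sigma_cell_unique x h1 h2 :
  sg h1 <= x < sg (h1 + 1)%Z -> sg h2 <= x < sg (h2 + 1)%Z -> h1 = h2.
Proof.
  intros H1 H2.
  assert (h1 < h2 + 1)%Z by (apply sigma_lt_iff; lra).
  assert (h2 < h1 + 1)%Z by (apply sigma_lt_iff; lra). lia.
Qed.

Lemma ordinate_add_mul w r t :
  ordinate rho k w (r + t * kZ)%Z = powerRZ tk t * ordinate rho k w r.
Proof. unfold ordinate. rewrite sigma_add_mul, idx0_add_mul. ring. Qed.

Lemma pt_eq w r t : pt rho k w r t = (sg (r + t * kZ)%Z, ordinate rho k w (r + t * kZ)%Z).
Proof. unfold pt, ordinate. now rewrite sigma_add_mul, idx0_add_mul. Qed.

Lemma ordinate_of_nat w h : (h < k)%nat -> w h = ordinate rho k w (Z.of_nat h) / sg (Z.of_nat h).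
Proof.
  intro H. pose proof (sigma_pos (Z.of_nat h)). unfold ordinate.
  rewrite idx0_of_nat by auto. field. lra.
Qed.

Lemma Rabs_ordinate_le w M : (forall j, (j < k)%nat -> Rabs (w j) <= M) ->
  forall r, Rabs (ordinate rho k w r) <= M * sg r.
Proof.
  intros Hw r. pose proof (sigma_pos r). pose proof (Hw _ (idx0_lt r)).
  unfold ordinate. rewrite Rabs_mult, (Rabs_right (sg r)) by lra. nra.
Qed.

Lemma ordinate_of_quasiperiodic (F : Z -> R) :
  (forall r t, F (r + t * kZ)%Z = powerRZ tk t * F r) ->
  forall r, ordinate rho k (fun h => F (Z.of_nat h) / sg (Z.of_nat h)) r = F r.
Proof.
  intros HF r. unfold ordinate. pose proof (idx0_spec r) as E.
  set (h := idx0 k r) in *. rewrite E, sigma_add_mul, HF.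
  pose proof (sigma_pos (Z.of_nat h)). field. lra.
Qed.

End Sigma.

Section Recurrences.
Variables (l m : nat) (alpha beta rho : nat -> R).
Hypotheses (hl : (0 < l)%nat) (hm : (0 < m)%nat).
Hypothesis hrho : forall i, (1 <= i <= Nat.lcm l m)%nat -> 1 < rho i.

Local Notation k := (Nat.lcm l m).
Local Notation kZ := (Z.of_nat (Nat.lcm l m)).
Local Notation lZ := (Z.of_nat l).
Local Notation mZ := (Z.of_nat m).
Local Notation nZ := (Z.of_nat l + Z.of_nat m)%Z.
Local Notation sg := (sigma rho (Nat.lcm l m)).
Local Notation tk := (tau rho (Nat.lcm l m)).
Local Notation X w := (ordinate rho (Nat.lcm l m) w).
Local Notation slopeA r := (alpha (idx1 l (r + 1))).
Local Notation slopeB r := (beta (idx1 m (r + 1))).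

Let k_pos : (0 < k)%nat := lcm_pos l m hl hm.

Lemma slopeA_add_mul r t : slopeA (r + t * kZ)%Z = slopeA r.
Proof.
  replace (r + t * kZ + 1)%Z with (r + 1 + t * kZ)%Z by ring.
  now rewrite idx1_add_mul by auto using Nat.divide_lcm_l.
Qed.

Lemma slopeB_add_mul r t : slopeB (r + t * kZ)%Z = slopeB r.
Proof.
  replace (r + t * kZ + 1)%Z with (r + 1 + t * kZ)%Z by ring.
  now rewrite idx1_add_mul by auto using Nat.divide_lcm_r.
Qed.

Definition slope_recurrences (Xa Xb : Z -> R) : Prop :=
  forall r, Xb (r + lZ)%Z - Xa r = slopeA r * (sg (r + lZ)%Z - sg r) /\
            Xa (r + mZ)%Z - Xb r = - slopeB r * (sg (r + mZ)%Z - sg r).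

Lemma slope_conditions_iff u v :
  slope_conditions l m alpha beta rho u v <-> slope_recurrences (X u) (X v).
Proof.
  unfold slope_conditions, slope_recurrences, segA, segB, pa, pb. cbv zeta.
  rewrite (forall_Z_residues k_pos).
  split; intros H h t Hh; specialize (H h t Hh); revert H;
    rewrite !(pt_eq k_pos hrho), !Nat2Z.inj_add, slopeA_add_mul, slopeB_add_mul; cbn [fst snd];
    replace (Z.of_nat h + lZ + t * kZ)%Z with (Z.of_nat h + t * kZ + lZ)%Z by ring;
    replace (Z.of_nat h + mZ + t * kZ)%Z with (Z.of_nat h + t * kZ + mZ)%Z by ring;
    rewrite !slope_eq_iff by (apply (sigma_lt k_pos hrho); lia); auto.
Qed.

Definition increment (r : Z) : R :=
  slopeA r * (sg (r + lZ)%Z - sg r) - slopeB (r + lZ)%Z * (sg (r + nZ)%Z - sg (r + lZ)%Z).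

Lemma increment_add_mul r t : increment (r + t * kZ)%Z = powerRZ tk t * increment r.
Proof.
  unfold increment. rewrite slopeA_add_mul.
  replace (r + t * kZ + lZ)%Z with (r + lZ + t * kZ)%Z by ring.
  replace (r + t * kZ + nZ)%Z with (r + nZ + t * kZ)%Z by ring.
  rewrite slopeB_add_mul, !(sigma_add_mul k_pos hrho). ring.
Qed.

Lemma recurrence_step Xa Xb : slope_recurrences Xa Xb ->
  forall r, Xa (r + nZ)%Z = Xa r + increment r.
Proof.
  intros H r. destruct (H r) as [HA _]. destruct (H (r + lZ)%Z) as [_ HB].
  replace (r + lZ + mZ)%Z with (r + nZ)%Z in HB by ring. unfold increment. lra.
Qed.

Lemma telescoping (Xa : Z -> R) : (forall r, Xa (r + nZ)%Z = Xa r + increment r) ->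
  forall r N, Xa (r + Z.of_nat (S N) * nZ)%Z =
              Xa r + sum_f_R0 (fun j => increment (r + Z.of_nat j * nZ)%Z) N.
Proof.
  intros Hstep r N. induction N as [|N IH]; [cbn [sum_f_R0] | rewrite tech5].
  - replace (r + Z.of_nat 1 * nZ)%Z with (r + nZ)%Z by lia.
    rewrite Hstep. do 2 f_equal. lia.
  - replace (r + Z.of_nat (S (S N)) * nZ)%Z with (r + Z.of_nat (S N) * nZ + nZ)%Z by lia.
    rewrite Hstep, IH. ring.
Qed.

Definition period_sum (r : Z) : R :=
  sum_f_R0 (fun j => increment (r + Z.of_nat j * nZ)%Z) (pred k).

Lemma tau_pow_n_gt1 : 1 < powerRZ tk nZ.
Proof.
  replace nZ with (Z.of_nat (l + m)) by lia. rewrite <- pow_powerRZ.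
  apply Rlt_pow_R1; [apply (tau_gt1 k_pos hrho) | lia].
Qed.

(* X_(r + kn) is reached both by k steps of length n and by n periods of length k. *)
Lemma ordinate_unique u Xb : slope_recurrences (X u) Xb ->
  forall r, X u r = period_sum r / (powerRZ tk nZ - 1).
Proof.
  intros H r. pose proof tau_pow_n_gt1.
  pose proof (telescoping _ (recurrence_step _ _ H) r (pred k)) as E.
  rewrite (Nat.succ_pred_pos _ k_pos) in E.
  replace (r + kZ * nZ)%Z with (r + nZ * kZ)%Z in E by ring.
  rewrite (ordinate_add_mul k_pos hrho) in E. unfold period_sum.
  apply (Rmult_eq_reg_r (powerRZ tk nZ - 1)); [|lra].
  unfold Rdiv. rewrite Rmult_assoc, Rinv_l by lra. lra.
Qed.

Definition Xsol (r : Z) : R := period_sum r / (powerRZ tk nZ - 1).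
Definition Ysol (r : Z) : R := Xsol (r - lZ)%Z + slopeA (r - lZ)%Z * (sg r - sg (r - lZ)%Z).

Lemma period_sum_add_mul r t : period_sum (r + t * kZ)%Z = powerRZ tk t * period_sum r.
Proof.
  unfold period_sum. rewrite scal_sum. apply sum_eq. intros j _.
  replace (r + t * kZ + Z.of_nat j * nZ)%Z with (r + Z.of_nat j * nZ + t * kZ)%Z by ring.
  rewrite increment_add_mul. ring.
Qed.

Lemma period_sum_step r :
  period_sum (r + nZ)%Z = period_sum r + (powerRZ tk nZ - 1) * increment r.
Proof.
  set (f j := increment (r + Z.of_nat j * nZ)%Z).
  assert (Hf0 : f 0%nat = increment r) by (unfold f; f_equal; lia).
  assert (Hfk : f k = powerRZ tk nZ * increment r).
  { unfold f. rewrite <- increment_add_mul. f_equal. ring. }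
  assert (Hshift : period_sum (r + nZ)%Z = sum_f_R0 (fun i => f (S i)) (pred k)).
  { apply sum_eq. intros j _. unfold f. rewrite Nat2Z.inj_succ. f_equal. ring. }
  pose proof (decomp_sum f k k_pos) as D.
  rewrite <- (Nat.succ_pred_pos _ k_pos) in D at 1.
  rewrite tech5, (Nat.succ_pred_pos _ k_pos) in D.
  rewrite Hshift. change (period_sum r) with (sum_f_R0 f (pred k)). lra.
Qed.

Lemma Xsol_add_mul r t : Xsol (r + t * kZ)%Z = powerRZ tk t * Xsol r.
Proof. unfold Xsol. rewrite period_sum_add_mul. unfold Rdiv. ring. Qed.

Lemma Ysol_add_mul r t : Ysol (r + t * kZ)%Z = powerRZ tk t * Ysol r.
Proof.
  unfold Ysol. replace (r + t * kZ - lZ)%Z with (r - lZ + t * kZ)%Z by ring.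
  rewrite Xsol_add_mul, slopeA_add_mul, !(sigma_add_mul k_pos hrho). ring.
Qed.

Lemma sol_recurrences : slope_recurrences Xsol Ysol.
Proof.
  intro r. unfold Ysol. replace (r + lZ - lZ)%Z with r by ring. split; [ring|].
  pose proof tau_pow_n_gt1.
  assert (Hstep : Xsol (r - lZ + nZ)%Z = Xsol (r - lZ)%Z + increment (r - lZ)%Z).
  { unfold Xsol. rewrite period_sum_step. field. lra. }
  replace (r - lZ + nZ)%Z with (r + mZ)%Z in Hstep by ring.
  rewrite Hstep. unfold increment.
  replace (r - lZ + lZ)%Z with r by ring. replace (r - lZ + nZ)%Z with (r + mZ)%Z by ring. ring.
Qed.

Definition usol (h : nat) : R := Xsol (Z.of_nat h) / sg (Z.of_nat h).
Definition vsol (h : nat) : R := Ysol (Z.of_nat h) / sg (Z.of_nat h).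

Lemma ordinate_usol : forall r, X usol r = Xsol r.
Proof. apply (ordinate_of_quasiperiodic k_pos hrho), Xsol_add_mul. Qed.

Lemma ordinate_vsol : forall r, X vsol r = Ysol r.
Proof. apply (ordinate_of_quasiperiodic k_pos hrho), Ysol_add_mul. Qed.

Lemma slope_conditions_sol : slope_conditions l m alpha beta rho usol vsol.
Proof.
  apply slope_conditions_iff. intro r.
  rewrite !ordinate_usol, !ordinate_vsol. apply sol_recurrences.
Qed.

Lemma slope_conditions_unique u v : slope_conditions l m alpha beta rho u v ->
  forall h, (h < k)%nat -> u h = usol h /\ v h = vsol h.
Proof.
  intros H h Hh. apply slope_conditions_iff in H.
  assert (Hu : forall r, X u r = Xsol r) by exact (ordinate_unique u _ H).
  rewrite (ordinate_of_nat k_pos hrho u h Hh), (ordinate_of_nat k_pos hrho v h Hh).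
  unfold usol, vsol, Ysol. rewrite Hu. split; [reflexivity|].
  destruct (H (Z.of_nat h - lZ)%Z) as [HA _].
  replace (Z.of_nat h - lZ + lZ)%Z with (Z.of_nat h) in HA by ring.
  rewrite <- Hu. f_equal. lra.
Qed.

End Recurrences.

Section Graph.
Variables (l m : nat) (alpha beta rho u v : nat -> R).
Hypotheses (hl : (0 < l)%nat) (hm : (0 < m)%nat).
Hypothesis hrho : forall i, (1 <= i <= Nat.lcm l m)%nat -> 1 < rho i.
Hypothesis hrec : slope_recurrences l m alpha beta rho
  (ordinate rho (Nat.lcm l m) u) (ordinate rho (Nat.lcm l m) v).

Local Notation k := (Nat.lcm l m).
Local Notation kZ := (Z.of_nat (Nat.lcm l m)).
Local Notation lZ := (Z.of_nat l).
Local Notation mZ := (Z.of_nat m).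
Local Notation sg := (sigma rho (Nat.lcm l m)).
Local Notation tk := (tau rho (Nat.lcm l m)).
Local Notation Xa := (ordinate rho (Nat.lcm l m) u).
Local Notation Xb := (ordinate rho (Nat.lcm l m) v).
Local Notation slopeA r := (alpha (idx1 l (r + 1))).
Local Notation slopeB r := (beta (idx1 m (r + 1))).
Local Notation nu := (nu_list l m alpha beta).

Let k_pos : (0 < k)%nat := lcm_pos l m hl hm.
Local Notation sg_lt_iff := (sigma_lt_iff k_pos hrho).
Local Notation sg_le_iff := (sigma_le_iff k_pos hrho).

(* The lines carrying the segments A_r and B_r, as (slope, intercept). *)
Definition lineA (r : Z) : R * R := (slopeA r, Xa r - slopeA r * sg r).
Definition lineB (r : Z) : R * R := (- slopeB r, Xb r + slopeB r * sg r).

Lemma lineA_start r : line_at (lineA r) (sg r) = Xa r.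
Proof. unfold line_at, lineA. simpl. ring. Qed.

Lemma lineB_start r : line_at (lineB r) (sg r) = Xb r.
Proof. unfold line_at, lineB. simpl. ring. Qed.

Lemma lineA_end r : line_at (lineA r) (sg (r + lZ)%Z) = Xb (r + lZ)%Z.
Proof. unfold line_at, lineA. simpl. destruct (hrec r) as [HA _]. lra. Qed.

Lemma lineB_end r : line_at (lineB r) (sg (r + mZ)%Z) = Xa (r + mZ)%Z.
Proof. unfold line_at, lineB. simpl. destruct (hrec r) as [_ HB]. lra. Qed.

Definition on_segments (x y : R) : Prop :=
  exists r, (sg r <= x <= sg (r + lZ)%Z /\ y = line_at (lineA r) x) \/
            (sg r <= x <= sg (r + mZ)%Z /\ y = line_at (lineB r) x).

Lemma on_segments_pos x y : on_segments x y -> 0 < x.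
Proof. intros [r [[H _]|[H _]]]; pose proof (sigma_pos k_pos hrho r); lra. Qed.

Lemma segmentA_iff (h : nat) t x y :
  segment (pa rho k u (Z.of_nat h) t) (pb rho k v (Z.of_nat (h + l)) t) (x, y) <->
  sg (Z.of_nat h + t * kZ)%Z <= x <= sg (Z.of_nat h + t * kZ + lZ)%Z /\
  y = line_at (lineA (Z.of_nat h + t * kZ)%Z) x.
Proof.
  set (r := (Z.of_nat h + t * kZ)%Z). unfold pa, pb. rewrite !(pt_eq k_pos hrho).
  replace (Z.of_nat (h + l) + t * kZ)%Z with (r + lZ)%Z by (unfold r; lia).
  rewrite segment_iff; cbn [fst snd]; [|apply (sigma_lt k_pos hrho); lia | apply hrec].
  unfold r, line_at, lineA. cbn [fst snd]. split; intros [Hx E]; split; auto; rewrite E; ring.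
Qed.

Lemma segmentB_iff (h : nat) t x y :
  segment (pb rho k v (Z.of_nat h) t) (pa rho k u (Z.of_nat (h + m)) t) (x, y) <->
  sg (Z.of_nat h + t * kZ)%Z <= x <= sg (Z.of_nat h + t * kZ + mZ)%Z /\
  y = line_at (lineB (Z.of_nat h + t * kZ)%Z) x.
Proof.
  set (r := (Z.of_nat h + t * kZ)%Z). unfold pa, pb. rewrite !(pt_eq k_pos hrho).
  replace (Z.of_nat (h + m) + t * kZ)%Z with (r + mZ)%Z by (unfold r; lia).
  rewrite segment_iff; cbn [fst snd]; [|apply (sigma_lt k_pos hrho); lia | apply hrec].
  unfold r, line_at, lineB. cbn [fst snd]. split; intros [Hx E]; split; auto; rewrite E; ring.
Qed.

Lemma Gset_iff x y : Gset l m rho u v (x, y) <-> (x, y) = (0, 0) \/ on_segments x y.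
Proof.
  unfold Gset, on_segments, segA, segB. cbv zeta. cbn [fst snd].
  setoid_rewrite segmentA_iff. setoid_rewrite segmentB_iff.
  rewrite (exists_Z_residues k_pos
    (fun r => (sg r <= x <= sg (r + lZ)%Z /\ y = line_at (lineA r) x) \/
              (sg r <= x <= sg (r + mZ)%Z /\ y = line_at (lineB r) x))).
  reflexivity.
Qed.

(* The l + m segments whose x-range contains the cell [sigma_h, sigma_(h+1)]. *)
Definition active_lines (h : Z) : list (R * R) :=
  map (fun j => lineA (h - Z.of_nat j)%Z) (seq 0 l) ++
  map (fun j => lineB (h - Z.of_nat j)%Z) (seq 0 m).

Lemma active_lines_length h : length (active_lines h) = (l + m)%nat.
Proof. unfold active_lines. now rewrite length_app, !length_map, !length_seq. Qed.

Lemma nu_length : length nu = (l + m)%nat.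
Proof. unfold nu_list. now rewrite length_app, !length_map, !length_seq. Qed.

Lemma active_lines_slopes h : Permutation (map fst (active_lines h)) nu.
Proof.
  unfold active_lines, nu_list. rewrite map_app, !map_map. cbn [lineA lineB fst].
  apply Permutation_app.
  - rewrite <- (map_map (fun j => idx1 l (h - Z.of_nat j + 1)) alpha).
    apply Permutation_map, idx1_consecutive_perm, hl.
  - rewrite <- (map_map (fun j => idx1 m (h - Z.of_nat j + 1)) (fun j => - beta j)).
    apply Permutation_map, idx1_consecutive_perm, hm.
Qed.

Lemma in_active_linesA h j : (j < l)%nat -> In (lineA (h - Z.of_nat j)%Z) (active_lines h).
Proof.
  intro. apply in_or_app. left. apply (in_map (fun j => lineA (h - Z.of_nat j)%Z)), in_seq. lia.
Qed.

Lemma in_active_linesB h j : (j < m)%nat -> In (lineB (h - Z.of_nat j)%Z) (active_lines h).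
Proof.
  intro. apply in_or_app. right. apply (in_map (fun j => lineB (h - Z.of_nat j)%Z)), in_seq. lia.
Qed.

Lemma window_shift {T} (f : Z -> T) h p :
  map (fun j => f (h - Z.of_nat j)%Z) (seq 0 p) ++ f (h - Z.of_nat p)%Z :: nil =
  f h :: map (fun j => f (h - 1 - Z.of_nat j)%Z) (seq 0 p).
Proof.
  transitivity (map (fun j => f (h - Z.of_nat j)%Z) (seq 0 (S p))).
  - now rewrite seq_S, map_app.
  - cbn [seq map]. rewrite Z.sub_0_r, <- seq_shift, map_map. f_equal.
    apply map_ext. intro j. f_equal. lia.
Qed.

(* At sigma_h the segments A_h and B_h start where B_(h-m) and A_(h-l) end, so
   the values of the two neighbouring cells agree as multisets. *)
Lemma active_lines_boundary h :
  Permutation (values (sg h) (active_lines h)) (values (sg h) (active_lines (h - 1)%Z)).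
Proof.
  set (vA h' := values (sg h) (map (fun j => lineA (h' - Z.of_nat j)%Z) (seq 0 l))).
  set (vB h' := values (sg h) (map (fun j => lineB (h' - Z.of_nat j)%Z) (seq 0 m))).
  assert (EA : vA h ++ Xb h :: nil = Xa h :: vA (h - 1)%Z).
  { pose proof (lineA_end (h - lZ)%Z) as E. replace (h - lZ + lZ)%Z with h in E by ring.
    rewrite <- E, <- lineA_start. unfold vA, values. rewrite !map_map.
    exact (window_shift (fun r => line_at (lineA r) (sg h)) h l). }
  assert (EB : vB h ++ Xa h :: nil = Xb h :: vB (h - 1)%Z).
  { pose proof (lineB_end (h - mZ)%Z) as E. replace (h - mZ + mZ)%Z with h in E by ring.
    rewrite <- E, <- lineB_start. unfold vB, values. rewrite !map_map.
    exact (window_shift (fun r => line_at (lineB r) (sg h)) h m). }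
  unfold active_lines, values in *. rewrite !map_app.
  fold (vA h) (vB h) (vA (h - 1)%Z) (vB (h - 1)%Z).
  apply (Permutation_cons_inv (a := Xb h)), (Permutation_cons_inv (a := Xa h)).
  apply perm_trans with ((vA h ++ Xb h :: nil) ++ (vB h ++ Xa h :: nil)).
  - apply Permutation_sym.
    eapply perm_trans; [apply Permutation_app; apply Permutation_sym, Permutation_cons_append|].
    simpl. eapply perm_trans; [apply perm_skip, Permutation_sym, Permutation_middle|].
    apply perm_swap.
  - rewrite EA, EB. simpl. apply perm_skip, Permutation_sym, Permutation_middle.
Qed.

Lemma active_on_segments h x L : sg h <= x < sg (h + 1)%Z ->
  In L (active_lines h) -> on_segments x (line_at L x).
Proof.
  intros Hx HL. apply in_app_or in HL as [HL|HL]; apply in_map_iff in HL as [j [<- Hj]];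
    apply in_seq in Hj; exists (h - Z.of_nat j)%Z; [left|right]; (split; [|reflexivity]);
    (split; [apply Rle_trans with (sg h); [apply sg_le_iff; lia | lra]|]);
    (left; apply Rlt_le_trans with (sg (h + 1)%Z); [lra | apply sg_le_iff; lia]).
Qed.

Lemma segmentA_active h r x : sg h <= x < sg (h + 1)%Z -> sg r <= x <= sg (r + lZ)%Z ->
  In (line_at (lineA r) x) (values x (active_lines h)).
Proof.
  intros Hx Hr. assert (r < h + 1)%Z by (apply sg_lt_iff; lra).
  destruct (Req_dec x (sg (r + lZ)%Z)) as [E|E].
  - assert (Eh : (r + lZ)%Z = h).
    { assert (h <= r + lZ)%Z by (apply sg_le_iff; lra).
      assert (r + lZ < h + 1)%Z by (apply sg_lt_iff; lra). lia. }
    assert (Hval : line_at (lineA r) x = line_at (lineB h) x).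
    { subst h x. now rewrite lineA_end, lineB_start. }
    rewrite Hval. apply (in_map (fun L => line_at L x)).
    rewrite <- (Z.sub_0_r h) at 1. apply (in_active_linesB h 0). lia.
  - assert (h < r + lZ)%Z by (apply sg_lt_iff; lra).
    apply (in_map (fun L => line_at L x)).
    replace r with (h - Z.of_nat (Z.to_nat (h - r)))%Z by lia. apply in_active_linesA. lia.
Qed.

Lemma segmentB_active h r x : sg h <= x < sg (h + 1)%Z -> sg r <= x <= sg (r + mZ)%Z ->
  In (line_at (lineB r) x) (values x (active_lines h)).
Proof.
  intros Hx Hr. assert (r < h + 1)%Z by (apply sg_lt_iff; lra).
  destruct (Req_dec x (sg (r + mZ)%Z)) as [E|E].
  - assert (Eh : (r + mZ)%Z = h).
    { assert (h <= r + mZ)%Z by (apply sg_le_iff; lra).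
      assert (r + mZ < h + 1)%Z by (apply sg_lt_iff; lra). lia. }
    assert (Hval : line_at (lineB r) x = line_at (lineA h) x).
    { subst h x. now rewrite lineB_end, lineA_start. }
    rewrite Hval. apply (in_map (fun L => line_at L x)).
    rewrite <- (Z.sub_0_r h) at 1. apply (in_active_linesA h 0). lia.
  - assert (h < r + mZ)%Z by (apply sg_lt_iff; lra).
    apply (in_map (fun L => line_at L x)).
    replace r with (h - Z.of_nat (Z.to_nat (h - r)))%Z by lia. apply in_active_linesB. lia.
Qed.

Lemma in_values_iff h x y : sg h <= x < sg (h + 1)%Z ->
  In y (values x (active_lines h)) <-> on_segments x y.
Proof.
  intro Hx. split.
  - intro Hy. apply in_map_iff in Hy as [L [<- HL]]. now apply active_on_segments with h.
  - intros [r [[Hr ->]|[Hr ->]]]; [apply segmentA_active | apply segmentB_active]; auto.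
Qed.

Definition cell (x : R) : Z := epsilon (inhabits 0%Z) (fun h => sg h <= x < sg (h + 1)%Z).

Lemma cell_spec x : 0 < x -> sg (cell x) <= x < sg (cell x + 1)%Z.
Proof. intro Hx. unfold cell. apply epsilon_spec, (sigma_cell_exists k_pos hrho), Hx. Qed.

Lemma cell_eq h x : sg h <= x < sg (h + 1)%Z -> cell x = h.
Proof.
  intro Hx. pose proof (sigma_pos k_pos hrho h).
  apply (sigma_cell_unique k_pos hrho x); auto. apply cell_spec. lra.
Qed.

(* The value 0 on x <= 0 is junk: a nu-system only constrains [0, oo). *)
Definition P (i : nat) (x : R) : R :=
  if Rle_dec x 0 then 0 else nth (pred i) (sort_R (values x (active_lines (cell x)))) 0.

Lemma P_nonpos i x : x <= 0 -> P i x = 0.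
Proof. intro Hx. unfold P. now destruct (Rle_dec x 0). Qed.

Lemma P_on_cell h x i : sg h <= x <= sg (h + 1)%Z ->
  P i x = nth (pred i) (sort_R (values x (active_lines h))) 0.
Proof.
  intro Hx. pose proof (sigma_pos k_pos hrho h). unfold P.
  destruct (Rle_dec x 0); [lra|].
  destruct (Req_dec x (sg (h + 1)%Z)) as [->|E].
  - rewrite (cell_eq (h + 1)%Z); [|split; [lra | apply sg_lt_iff; lia]].
    rewrite (sort_R_perm_eq _ _ (active_lines_boundary (h + 1)%Z)).
    now replace (h + 1 - 1)%Z with h by ring.
  - rewrite (cell_eq h); auto. lra.
Qed.

Lemma values_length x h : length (sort_R (values x (active_lines h))) = (l + m)%nat.
Proof.
  rewrite (Permutation_length (sort_R_perm _)). unfold values.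
  now rewrite length_map, active_lines_length.
Qed.

Lemma P_on_segments x i : 0 < x -> (1 <= i <= l + m)%nat -> on_segments x (P i x).
Proof.
  intros Hx Hi. pose proof (cell_spec x Hx) as Hc.
  rewrite (P_on_cell (cell x)) by lra. apply (in_values_iff (cell x)); auto.
  eapply Permutation_in; [apply sort_R_perm|]. apply nth_In. rewrite values_length. lia.
Qed.

Definition linear_piece (a b : R) : Prop :=
  exists Ls, length Ls = (l + m)%nat /\ Permutation (map fst Ls) nu /\
    forall z, a <= z <= b -> forall i, (1 <= i <= l + m)%nat ->
      P i z = line_at (nth (pred i) Ls (0, 0)) z.

Lemma linear_piece_in_cell h p q : sg h <= p -> p < q -> q <= sg (h + 1)%Z ->
  (forall c, In c (crossings (active_lines h)) -> ~ p < c < q) -> linear_piece p q.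
Proof.
  intros Hp Hpq Hq Hc.
  destruct (sorted_values_fixed_order (active_lines h) p q Hpq Hc) as [Ls [Hperm HLs]].
  assert (Hlen : length Ls = (l + m)%nat)
    by (rewrite (Permutation_length Hperm); apply active_lines_length).
  exists Ls. split; [exact Hlen|]. split.
  - eapply perm_trans; [apply Permutation_map, Hperm | apply active_lines_slopes].
  - intros z Hz i Hi. rewrite (P_on_cell h), HLs by lra. unfold values.
    rewrite (nth_indep _ _ (line_at (0, 0) z)) by (rewrite length_map; lia).
    apply (map_nth (fun L => line_at L z)).
Qed.

Lemma chain_in_cell h p q : sg h <= p -> p < q -> q <= sg (h + 1)%Z ->
  chain linear_piece p q.
Proof.
  intros Hp Hpq Hq. apply (chain_of_breakpoints _ (crossings (active_lines h))); auto.
  intros p' q' ? ? ? Hc. apply linear_piece_in_cell with h; auto; lra.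
Qed.

Lemma chain_across_cells N : forall h a b, sg h <= a < sg (h + 1)%Z -> a < b ->
  b <= sg (h + Z.of_nat N)%Z -> chain linear_piece a b.
Proof.
  induction N as [|N IH]; intros h a b Ha Hab Hb.
  - rewrite Z.add_0_r in Hb. lra.
  - destruct (Rle_dec b (sg (h + 1)%Z)).
    + apply chain_in_cell with h; lra.
    + apply chain_trans with (sg (h + 1)%Z); [apply chain_in_cell with h; lra|].
      apply (IH (h + 1)%Z); [split; [lra | apply sg_lt_iff; lia] | lra |].
      now replace (h + 1 + Z.of_nat N)%Z with (h + Z.of_nat (S N))%Z by lia.
Qed.

Lemma chain_linear_pieces a b : 0 < a -> a < b -> chain linear_piece a b.
Proof.
  intros Ha Hab. pose proof (cell_spec a Ha) as Hca. pose proof (cell_spec b ltac:(lra)) as Hcb.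
  assert (cell a < cell b + 1)%Z by (apply sg_lt_iff; lra).
  apply (chain_across_cells (Z.to_nat (cell b + 1 - cell a)) (cell a)); auto.
  rewrite Z2Nat.id by lia.
  replace (cell a + (cell b + 1 - cell a))%Z with (cell b + 1)%Z by ring. lra.
Qed.

Lemma on_segments_bound M :
  (forall j, (j < k)%nat -> Rabs (u j) <= M /\ Rabs (v j) <= M) ->
  forall x y, on_segments x y -> Rabs y <= M * x.
Proof.
  intros HM x y [r [[Hr ->]|[Hr ->]]].
  - apply (Rabs_interpolation_le (sg r) (sg (r + lZ)%Z) x _ (Xa r) (Xb (r + lZ)%Z)); auto.
    + split; [apply (sigma_pos k_pos hrho) | apply sg_lt_iff; lia].
    + destruct (hrec r) as [HA _]. unfold line_at, lineA. cbn [fst snd].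
      replace (Xb (r + lZ)%Z) with (Xa r + slopeA r * (sg (r + lZ)%Z - sg r)) by lra. ring.
    + apply (Rabs_ordinate_le k_pos hrho). intros j Hj. apply HM, Hj.
    + apply (Rabs_ordinate_le k_pos hrho). intros j Hj. apply HM, Hj.
  - apply (Rabs_interpolation_le (sg r) (sg (r + mZ)%Z) x _ (Xb r) (Xa (r + mZ)%Z)); auto.
    + split; [apply (sigma_pos k_pos hrho) | apply sg_lt_iff; lia].
    + destruct (hrec r) as [_ HB]. unfold line_at, lineB. cbn [fst snd].
      replace (Xa (r + mZ)%Z) with (Xb r - slopeB r * (sg (r + mZ)%Z - sg r)) by lra. ring.
    + apply (Rabs_ordinate_le k_pos hrho). intros j Hj. apply HM, Hj.
    + apply (Rabs_ordinate_le k_pos hrho). intros j Hj. apply HM, Hj.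
Qed.

Lemma on_segments_cone : exists M, 0 <= M /\ forall x y, on_segments x y -> Rabs y <= M * x.
Proof.
  destruct (finite_bound u k) as [Mu [HMu Hu]]. destruct (finite_bound v k) as [Mv [HMv Hv]].
  exists (Rmax Mu Mv). split; [eapply Rle_trans; [exact HMu | apply Rmax_l]|].
  apply on_segments_bound. intros j Hj.
  split; eapply Rle_trans; [apply Hu, Hj | apply Rmax_l | apply Hv, Hj | apply Rmax_r].
Qed.

(* At 0 use the cone |y| <= M x; at x > 0 the function P_i is affine on each side. *)
Lemma P_local_lipschitz i x : (1 <= i <= l + m)%nat -> 0 <= x ->
  exists d K, 0 < d /\ 0 <= K /\
    forall y, Rabs (y - x) < d -> Rabs (P i y - P i x) <= K * Rabs (y - x).
Proof.
  intros Hi Hx. destruct (Req_dec x 0) as [->|Hx0].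
  - destruct on_segments_cone as [M [HM Hcone]]. exists 1, M. split; [lra|]. split; [exact HM|].
    intros y _. rewrite (P_nonpos i 0), !Rminus_0_r by lra.
    destruct (Rle_dec y 0).
    + rewrite P_nonpos, Rabs_R0 by lra. apply Rmult_le_pos; [exact HM | apply Rabs_pos].
    + rewrite (Rabs_right y) by lra. apply Hcone, P_on_segments; auto; lra.
  - destruct (chain_last _ _ _ (chain_linear_pieces (x / 2) x ltac:(lra) ltac:(lra)))
      as [c1 [Hc1 [L1 [_ [_ HL1]]]]].
    destruct (chain_first _ _ _ (chain_linear_pieces x (x + 1) ltac:(lra) ltac:(lra)))
      as [c2 [Hc2 [L2 [_ [_ HL2]]]]].
    set (s1 := fst (nth (pred i) L1 (0, 0))). set (s2 := fst (nth (pred i) L2 (0, 0))).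
    exists (Rmin (x - c1) (c2 - x)), (Rabs s1 + Rabs s2).
    pose proof (Rabs_pos s1). pose proof (Rabs_pos s2).
    split; [apply Rmin_pos; lra|]. split; [lra|].
    apply (lipschitz_of_line_sides (P i) x c1 c2); [lra | intros z Hz | intros z Hz];
      [apply HL1 | apply HL2]; auto.
Qed.

Lemma P_sorted i : (1 <= i < l + m)%nat -> forall x, 0 <= x -> P i x <= P (S i) x.
Proof.
  intros Hi x Hx. destruct (Req_dec x 0) as [->|Hx0]; [rewrite !P_nonpos; lra|].
  pose proof (cell_spec x ltac:(lra)). rewrite !(P_on_cell (cell x)) by lra.
  replace (pred (S i)) with (S (pred i)) by lia.
  apply StronglySorted_Rle_nth; [apply sort_R_sorted | rewrite values_length; lia].
Qed.

Lemma P_piecewise_linear a b : 0 < a -> a < b ->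
  exists xs : list R,
    let pts := a :: xs ++ b :: nil in
    forall j, (S j < length pts)%nat ->
      nth j pts 0 < nth (S j) pts 0 /\
      forall i, (1 <= i <= l + m)%nat ->
        exists s, affine_on (P i) s (nth j pts 0) (nth (S j) pts 0).
Proof.
  intros Ha Hab. destruct (chain_subdivision _ _ _ (chain_linear_pieces a b Ha Hab)) as [xs Hxs].
  exists xs. cbv zeta in *. intros j Hj. destruct (Hxs j Hj) as [Hlt [Ls [_ [_ HLs]]]].
  split; auto. intros i Hi. exists (fst (nth (pred i) Ls (0, 0))).
  intros p q Hp Hq. rewrite !HLs by auto. unfold line_at. ring.
Qed.

Lemma P_slopes_on_piece x y (s : nat -> R) : 0 <= x -> x < y ->
  exists Ls, length Ls = (l + m)%nat /\ Permutation (map fst Ls) nu /\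
    forall i, (1 <= i <= l + m)%nat -> affine_on (P i) (s i) x y ->
      s i = fst (nth (pred i) Ls (0, 0)).
Proof.
  intros Hx Hxy.
  destruct (chain_first _ _ _ (chain_linear_pieces ((x + y) / 2) y ltac:(lra) ltac:(lra)))
    as [c [Hc [Ls [Hlen [Hperm HLs]]]]].
  exists Ls. split; [exact Hlen|]. split; [exact Hperm|]. intros i Hi Haff.
  apply (affine_on_line_slope (P i) (s i) x y ((x + y) / 2) c); try lra; auto.
Qed.

Lemma nu_system_P : nu_system nu P.
Proof.
  unfold nu_system. cbv zeta. rewrite nu_length.
  split; [|split; [|split; [|split; [|split]]]].
  - intros i Hi x Hx eps Heps.
    destruct (P_local_lipschitz i x Hi Hx) as [d [K [Hd [HK HL]]]].
    destruct (continuity_of_local_lipschitz (P i) x d K Hd HK HL eps Heps) as [delta [Hdelta H]].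
    exists delta. auto.
  - apply P_sorted.
  - intros i _. apply P_nonpos. lra.
  - apply P_piecewise_linear.
  - intros i Hi x y s Hx Hxy Haff.
    destruct (P_slopes_on_piece x y (fun _ => s) Hx Hxy) as [Ls [Hlen [Hperm Hs]]].
    rewrite (Hs i Hi Haff). eapply Permutation_in; [exact Hperm|].
    apply in_map, nth_In. lia.
  - intros x y s Hx Hxy Haff.
    destruct (P_slopes_on_piece x y s Hx Hxy) as [Ls [Hlen [Hperm Hs]]].
    rewrite <- Hlen. transitivity (map fst Ls); [|exact Hperm].
    rewrite <- (map_nth_seq1 fst (0, 0)). apply Permutation_refl', map_ext_in.
    intros i Hi. apply in_seq in Hi. apply Hs; [lia | apply Haff; lia].
Qed.

Lemma Gset_graph_union z : Gset l m rho u v z <-> graph_union (length nu) P z.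
Proof.
  destruct z as [x y]. rewrite Gset_iff. unfold graph_union. rewrite nu_length. cbn [fst snd].
  split.
  - intros [E|Hxy].
    + injection E as -> ->. split; [lra|]. exists 1%nat. split; [lia | now rewrite P_nonpos by lra].
    + pose proof (on_segments_pos _ _ Hxy) as Hx. pose proof (cell_spec x Hx) as Hc.
      split; [lra|].
      apply (in_values_iff (cell x)), (Permutation_in _ (Permutation_sym (sort_R_perm _))) in Hxy;
        auto.
      destruct (In_nth _ _ 0 Hxy) as [j [Hj E]]. rewrite values_length in Hj.
      exists (S j). split; [lia|]. rewrite (P_on_cell (cell x)) by lra. auto.
  - intros [Hx [i [Hi ->]]]. destruct (Req_dec x 0) as [->|Hx0].
    + left. now rewrite P_nonpos by lra.
    + right. apply P_on_segments; auto. lra.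
Qed.

Lemma on_segments_scale t x y :
  on_segments x y -> on_segments (powerRZ tk t * x) (powerRZ tk t * y).
Proof.
  assert (Ht : 0 < powerRZ tk t) by (apply powerRZ_lt; pose proof (tau_gt1 k_pos hrho); lra).
  intros [r [[Hr ->]|[Hr ->]]]; exists (r + t * kZ)%Z; [left|right];
    [replace (r + t * kZ + lZ)%Z with (r + lZ + t * kZ)%Z by ring
    |replace (r + t * kZ + mZ)%Z with (r + mZ + t * kZ)%Z by ring];
    rewrite !(sigma_add_mul k_pos hrho); (split; [split; apply Rmult_le_compat_l; lra|]);
    unfold line_at, lineA, lineB; cbn [fst snd];
    rewrite ?(slopeA_add_mul _ _ _ hl), ?(slopeB_add_mul _ _ _ hm),
      (ordinate_add_mul k_pos hrho), (sigma_add_mul k_pos hrho); ring.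
Qed.

Lemma Gset_scale z : Gset l m rho u v z <-> Gset l m rho u v (tk * fst z, tk * snd z).
Proof.
  pose proof (tau_gt1 k_pos hrho) as Ht.
  destruct z as [x y]. cbn [fst snd]. rewrite !Gset_iff. split.
  - intros [E|Hxy].
    + left. injection E as -> ->. f_equal; ring.
    + right. replace tk with (powerRZ tk 1) by (simpl; ring). now apply on_segments_scale.
  - intros [E|Hxy].
    + left. injection E as E1 E2. f_equal; nra.
    + right. apply (on_segments_scale (-1)) in Hxy.
      replace (powerRZ tk (-1)) with (/ tk) in Hxy by (simpl; field; lra).
      rewrite <- !Rmult_assoc, Rinv_l, !Rmult_1_l in Hxy by lra. exact Hxy.
Qed.

Lemma regular_nu_graph_Gset : regular_nu_graph nu (Gset l m rho u v).
Proof.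
  split.
  - exists P. split; [apply nu_system_P | apply Gset_graph_union].
  - exists tk. split; [apply (tau_gt1 k_pos hrho) | apply Gset_scale].
Qed.

End Graph.

Theorem theorem2p1
  (l m : nat) (alpha beta rho : nat -> R)
  (hl : (0 < l)%nat) (hm : (0 < m)%nat)
  (halpha : forall i, (1 <= i <= l)%nat -> 0 <= alpha i)
  (hbeta : forall j, (1 <= j <= m)%nat -> 0 <= beta j)
  (hnz : (exists i, (1 <= i <= l)%nat /\ alpha i <> 0) \/
         (exists j, (1 <= j <= m)%nat /\ beta j <> 0))
  (hsum : sum_range alpha l = sum_range beta m)
  (hrho : forall i, (1 <= i <= Nat.lcm l m)%nat -> 1 < rho i) :
  exists u v : nat -> R,
    (slope_conditions l m alpha beta rho u v /\
     regular_nu_graph (nu_list l m alpha beta) (Gset l m rho u v)) /\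
    (forall u' v' : nat -> R, slope_conditions l m alpha beta rho u' v' ->
       forall h, (h < Nat.lcm l m)%nat -> u' h = u h /\ v' h = v h).
Proof.
  exists (usol l m alpha beta rho), (vsol l m alpha beta rho).
  pose proof (slope_conditions_sol l m alpha beta rho hl hm hrho) as Hsol.
  split; [split|].
  - exact Hsol.
  - apply regular_nu_graph_Gset; auto.
    now apply (slope_conditions_iff l m alpha beta rho hl hm hrho).
  - exact (slope_conditions_unique l m alpha beta rho hl hm hrho).
Qed.
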